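(* Let $\hat W$ be a first degree iMPO in regular form with bond dimension $\chi$, and let $\hat V=\begin{pmatrix}\hat 1&\hat{\mathbf c}\\0&\hat{\mathsf A}\end{pmatrix}$ be its upper-left $(1+\chi)\times(1+\chi)$ block. Then $1$ is an eigenvalue of the transfer matrix $T_V$, every other eigenvalue $\lambda$ of $T_V$ satisfies $|\lambda|<1$, and there is a left eigenvector $X$ with $XT_V=X$ of the block form $$X=\begin{pmatrix}1&\mathbf x\\ \mathbf x^\dagger&\mathsf X\end{pmatrix},$$ where $\mathbf x$ is a row vector of length $\chi$ and $\mathsf X$ is a $\chi\times\chi$ matrix.
   Context: Fix the algebra $\mathcal A$ of operators on $\mathbb C^q$ with inner product $\langle\hat A,\hat B\rangle=\mathrm{Tr}[\hat A^\dagger\hat B]/\mathrm{Tr}[\hat 1]$ and an orthonormal basis $\{\hat O_\alpha\}_{0\le\alpha<q^2}$ with $\hat O_0=\hat 1$. For a matrix $\hat W$ with entries in $\mathcal A$ write $\hat W=\sum_\alpha\hat O_\alpha W_\alpha$ with complex matrices $(W_\alpha)_{ab}=\langle\hat O_\alpha,\hat W_{ab}\rangle$. For a square such $\hat W$, its transfer matrix $T_W=\sum_\alpha\overline{W_\alpha}\otimes W_\alpha$ acts on square complex matrices $X$ from the left by $XT_W=\sum_\alpha W_\alpha^\dagger XW_\alpha$; a left eigenvector means $XT_W=\lambda X$. An iMPO in regular form of bond dimension $\chi$ is a $(\chi+2)\times(\chi+2)$ matrix with entries in $\mathcal A$ (indices $0,1,\dots,\chi,\chi+1$) of block form $\hat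 W=\begin{pmatrix}\hat 1&\hat{\mathbf c}&\hat d\\0&\hat{\mathsf A}&\hat{\mathbf b}\\0&0&\hat 1\end{pmatrix}$ with block sizes $1,\chi,1$. It is called first degree if every eigenvalue of $T_A$, the transfer matrix of the $\chi\times\chi$ block $\hat{\mathsf A}$, has modulus strictly less than $1$. *)

From mathcomp Require Import all_boot all_algebra.
From mathcomp Require Import reals complex.
Set Implicit Arguments. Unset Strict Implicit. Unset Printing Implicit Defensive.
Import GRing.Theory Num.Theory.
Local Open Scope ring_scope.

Section Defs.
Variable R : realType.
Local Notation C := R[i].

Definition adjmx m n (M : 'M[C]_(m, n)) : 'M[C]_(n, m) := map_mx Num.conj M^T.

Definition op_inner q (A B : 'M[C]_q) : C := \tr (adjmx A *m B) / q%:R.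

Definition orthonormal_op_basis q (O : 'I_(q ^ 2) -> 'M[C]_q) : Prop :=
  (forall a b, op_inner (O a) (O b) = (a == b)%:R) /\
  (forall h : (0 < q ^ 2)%N, O (Ordinal h) = 1%:M).

Definition coefmx q (O : 'I_(q ^ 2) -> 'M[C]_q) m n (W : 'M['M[C]_q]_(m, n))
  (al : 'I_(q ^ 2)) : 'M[C]_(m, n) :=
  \matrix_(a, b) op_inner (O al) (W a b).

(* transfer matrix T_W acting on the left: X T_W = sum_alpha W_alpha^dag X W_alpha *)
Definition transfer q (O : 'I_(q ^ 2) -> 'M[C]_q) n (W : 'M['M[C]_q]_n)
  (X : 'M[C]_n) : 'M[C]_n :=
  \sum_(al < q ^ 2) adjmx (coefmx O W al) *m X *m coefmx O W al.

Definition transfer_mx q (O : 'I_(q ^ 2) -> 'M[C]_q) n (W : 'M['M[C]_q]_n)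
  : 'M[C]_(n * n) := lin_mx (transfer O W).

Definition regular_iMPO q chi (c : 'M['M[C]_q]_(1, chi)) (A : 'M['M[C]_q]_chi)
  (b : 'M['M[C]_q]_(chi, 1)) (d : 'M['M[C]_q]_(1, 1))
  : 'M['M[C]_q]_(1 + chi + 1) :=
  block_mx (block_mx (const_mx 1%:M) c 0 A) (col_mx d b) 0 (const_mx 1%:M).

Definition first_degree q (O : 'I_(q ^ 2) -> 'M[C]_q) chi
  (A : 'M['M[C]_q]_chi) : Prop :=
  forall lam : C, eigenvalue (transfer_mx O A) lam -> `|lam| < 1.

End Defs.

(* The coefficient matrices of V are block upper triangular, [[delta_{al,0}, c_al], [0, A_al]],
   so X T_V is block triangular in X = [[x00, x], [y, Y]]: its diagonal parts are x00,
   x A_0, A_0^dag y and Y T_A.  Hence every eigenvalue of T_V other than 1 is an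
   eigenvalue of A_0, the conjugate of one, or an eigenvalue of T_A, and it remains to
   see that the eigenvalues of A_0 lie in the open unit disk.  On positive semidefinite
   matrices T_A dominates Y |-> A_0^dag Y A_0, so an eigenvector v A_0 = mu v with
   |mu| >= 1 would give T_A (v^dag v) >= v^dag v and iterates of T_A that do not decay,
   while spectral radius < 1 forces every orbit of T_A to vanish.  The fixed point is
   then found by solving x = c_0 + x A_0 and Y = B + Y T_A, which is possible because
   1 is an eigenvalue of neither A_0 nor T_A. *)

From HB Require Import structures.
From mathcomp Require Import all_boot all_order all_algebra.
From mathcomp Require Import reals complex.
From mathcomp Require Import lra.
Set Implicit Arguments. Unset Strict Implicit. Unset Printing Implicit Defensive.
Import Order.TTheory GRing.Theory Num.Theory.
Local Open Scope ring_scope.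

Lemma sum_block_mx (R : nmodType) (I : finType) m1 m2 n1 n2
    (A : I -> 'M[R]_(m1, n1)) (B : I -> 'M_(m1, n2)) (D : I -> 'M_(m2, n1))
    (E : I -> 'M_(m2, n2)) :
  \sum_k block_mx (A k) (B k) (D k) (E k) =
  block_mx (\sum_k A k) (\sum_k B k) (\sum_k D k) (\sum_k E k).
Proof.
elim: (index_enum I) => [|k s IHs]; first by rewrite !big_nil block_mx0.
by rewrite !big_cons IHs add_block_mx.
Qed.

Lemma affine_fixpoint (F : fieldType) n (M : 'M[F]_n) (b : 'rV_n) :
  ~~ eigenvalue M 1 -> exists y, b + y *m M = y.
Proof.
move=> M1; have unit_1M : 1%:M - M \in unitmx.
  rewrite unitmxE unitfE; apply: contra M1 => /det0P[v v0 v1M].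
  apply/eigenvalueP; exists v; rewrite // scale1r.
  by apply/eqP; rewrite -subr_eq0 -oppr_eq0 opprB -{1}[v]mulmx1 -mulmxBr v1M.
set y := b *m invmx (1%:M - M); exists y.
have <- : y *m (1%:M - M) = b by rewrite mulmxKV.
by rewrite mulmxBr mulmx1 subrK.
Qed.

Lemma not_eigenvalue1 (F : numFieldType) n (M : 'M[F]_n) :
  (forall lam, eigenvalue M lam -> `|lam| < 1) -> ~~ eigenvalue M 1.
Proof. by move=> M_lt1; apply/negP => /M_lt1; rewrite normr1 ltxx. Qed.

Lemma bernoulli_ineq (F : realDomainType) (h : F) k :
  0 <= h -> 1 + k%:R * h <= (1 + h) ^+ k.
Proof.
move=> h_ge0; elim: k => [|k IHk]; first by rewrite mul0r addr0 expr0.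
have kh_ge0 : 0 <= k%:R * h by rewrite mulr_ge0.
have := ler_wpM2r (addr_ge0 ler01 h_ge0) IHk.
by rewrite exprSr -natr1; nra.
Qed.

Lemma exists_expr_mul_le (F : archiRealFieldType) (r K e : F) :
  0 <= r -> r < 1 -> 0 < e -> exists k, r ^+ k * K <= e.
Proof.
move=> r_ge0 r_lt1 e_gt0.
have [K_le_e|e_lt_K] := lerP K e; first by exists 0%N; rewrite expr0 mul1r.
have K_gt0 : 0 < K by apply: lt_trans e_lt_K.
have [->|r_neq0] := eqVneq r 0; first by exists 1%N; rewrite expr1 mul0r ltW.
have r_gt0 : 0 < r by rewrite lt_def r_neq0.
pose h := r^-1 - 1; have h_gt0 : 0 < h by rewrite subr_gt0 invf_gt1.
pose k := Num.bound (K / (e * h)); exists k.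
have k_gt : K / (e * h) < k%:R by apply: archi_boundP; rewrite ltW ?divr_gt0 ?mulr_gt0.
have := bernoulli_ineq k (ltW h_gt0).
have -> : 1 + h = r^-1 by rewrite addrC subrK.
rewrite exprVn => bern.
have rk_gt0 : 0 < r ^+ k by apply: exprn_gt0.
have K_le : K <= ((r ^+ k)^-1 - 1) * e.
  by move: k_gt; rewrite ltr_pdivrMr ?mulr_gt0 //; nra.
apply: le_trans (ler_wpM2l (ltW rk_gt0) K_le) _.
by rewrite mulrA mulrBr divff ?gt_eqF // mulr1 ler_piMl ?gerBl ?ltW.
Qed.

Section Adjoint.
Variable R : realType.
Local Notation C := R[i].

Lemma adjmxK m n (M : 'M[C]_(m, n)) : adjmx (adjmx M) = M.
Proof. exact: trmxCK. Qed.

Lemma adjmxM m n p (A : 'M[C]_(m, n)) (B : 'M_(n, p)) :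
  adjmx (A *m B) = adjmx B *m adjmx A.
Proof. by rewrite /adjmx trmx_mul map_mxM. Qed.

Lemma adjmxD m n (A B : 'M[C]_(m, n)) : adjmx (A + B) = adjmx A + adjmx B.
Proof. by rewrite /adjmx linearD map_mxD. Qed.

Lemma adjmxZ m n (a : C) (M : 'M[C]_(m, n)) : adjmx (a *: M) = a^* *: adjmx M.
Proof. by rewrite /adjmx linearZ map_mxZ. Qed.

Lemma adjmx0 m n : adjmx (0 : 'M[C]_(m, n)) = 0.
Proof. by rewrite /adjmx trmx0 map_mx0. Qed.

Lemma adjmx_eq0 m n (M : 'M[C]_(m, n)) : (adjmx M == 0) = (M == 0).
Proof.
by apply/eqP/eqP => [M0|->]; rewrite ?adjmx0 // -[M]adjmxK M0 adjmx0.
Qed.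

Lemma adjmx_scalar n (a : C) : adjmx (a%:M : 'M_n) = a^*%:M.
Proof. by rewrite /adjmx tr_scalar_mx map_scalar_mx. Qed.

Lemma adjmx_block m1 m2 n1 n2 (A : 'M[C]_(m1, n1)) (B : 'M_(m1, n2))
    (D : 'M_(m2, n1)) (E : 'M_(m2, n2)) :
  adjmx (block_mx A B D E) = block_mx (adjmx A) (adjmx D) (adjmx B) (adjmx E).
Proof. by rewrite /adjmx tr_block_mx map_block_mx. Qed.

Lemma adjmxE m n (M : 'M[C]_(m, n)) i j : adjmx M i j = (M j i)^*.
Proof. by rewrite !mxE. Qed.

End Adjoint.

Section Vanishing.
Variable R : realType.
Local Notation C := R[i].
Local Notation normc := (@Normc.normc R).

Lemma normr_normc (z : C) : `|z| = (normc z)%:C%C.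
Proof. by case: z. Qed.

Lemma normc_ge0 (z : C) : 0 <= normc z.
Proof. by rewrite -ler0c -normr_normc. Qed.

Lemma normc_gt0 (z : C) : (0 < normc z) = (z != 0).
Proof. by rewrite -normr_gt0 normr_normc (_ : 0 = 0%:C%C) // ltcR. Qed.

Lemma normc_lt1 (z : C) : (normc z < 1) = (`|z| < 1).
Proof. by rewrite normr_normc -ltcR. Qed.

Lemma normc_le (a b : C) : 0 <= a -> a <= b -> normc a <= normc b.
Proof.
by move=> a_ge0 ab; rewrite -lecR -!normr_normc !ger0_norm // (le_trans a_ge0).
Qed.

Definition vanishing (u : nat -> C) :=
  forall e : R, 0 < e -> exists N, forall n, (N <= n)%N -> normc (u n) <= e.

Lemma eq_vanishing (u w : nat -> C) : u =1 w -> vanishing u -> vanishing w.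
Proof. by move=> uw u0 e /u0[N uN]; exists N => n /uN; rewrite uw. Qed.

Lemma vanishing0 : vanishing (fun=> 0).
Proof. by move=> e e_gt0; exists 0%N => n _; rewrite Normc.normc0 ltW. Qed.

Lemma vanishing_recurrence (u : nat -> C) (r : C) :
  `|r| < 1 -> vanishing (fun n => u n.+1 - r * u n) -> vanishing u.
Proof.
rewrite -normc_lt1 => r_lt1 ur e e_gt0.
set rho := normc r; have rho_ge0 : 0 <= rho := normc_ge0 r.
set d := e / 2; have d_gt0 : 0 < d by rewrite divr_gt0.
have gap : 0 < 1 - rho by rewrite subr_gt0.
have [N uN] := ur (d * (1 - rho)) (mulr_gt0 d_gt0 gap).
have step n : (N <= n)%N -> normc (u n.+1) - d <= rho * (normc (u n) - d).
  move=> /uN; have := le_normcD (u n.+1 - r * u n) (r * u n).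
  by rewrite subrK Normc.normcM -/rho; lra.
have decay k : normc (u (N + k)%N) - d <= rho ^+ k * (normc (u N) - d).
  elim: k => [|k IHk]; first by rewrite addn0 expr0 mul1r.
  rewrite addnS exprS -mulrA; apply: le_trans (step _ (leq_addr _ _)) _.
  exact: ler_wpM2l.
have [k0 k0_small] := exists_expr_mul_le (normc (u N)) rho_ge0 r_lt1 d_gt0.
exists (N + k0)%N => n /subnKC; move: (n - _)%N => j <-; rewrite -addnA.
have rk_le : rho ^+ (k0 + j) <= rho ^+ k0.
  by rewrite exprD ler_piMr ?exprn_ge0 // exprn_ile1 // ltW.
have := ler_wpM2r (normc_ge0 (u N)) rk_le.
have := decay (k0 + j)%N.
have : 0 <= rho ^+ (k0 + j) * d by rewrite mulr_ge0 ?exprn_ge0 // ltW.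
have : e = d + d by rewrite /d -splitr.
lra.
Qed.

Lemma vanishing_orbit N (M : 'M[C]_N) (g : 'rV[C]_N -> C) (v : 'rV_N) :
  (forall lam, eigenvalue M lam -> `|lam| < 1) -> scalar g ->
  vanishing (fun k => g (v *m M ^+ k)).
Proof.
(* Every factor M - z of the characteristic polynomial yields a first-order
   recurrence with ratio z, and by Cayley-Hamilton the product of the factors is 0. *)
move=> M_lt1 g_lin.
have g0 : g 0 = 0 by have := g_lin (-1) 0 0; rewrite scaler0 addr0 mulN1r addNr.
case: N M g v g_lin g0 M_lt1 => [|N] M g v g_lin g0 M_lt1.
  by apply: eq_vanishing vanishing0 => k; rewrite (thinmx0 v) mul0mx g0.
have factor z Q : `|z| < 1 ->
    vanishing (fun k => g (v *m M ^+ k *m ((M - z%:M) *m Q))) ->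
    vanishing (fun k => g (v *m M ^+ k *m Q)).
  move=> z_lt1 /eq_vanishing vz; apply: (vanishing_recurrence z_lt1); apply: vz => k.
  rewrite mulmxBl mul_scalar_mx mulmxBr -scalemxAr exprSr -mulmxE !mulmxA.
  by rewrite -[_ - _]addrC -scaleNr g_lin mulNr addrC.
have prod rs Q : all (fun z => `|z| < 1) rs ->
    vanishing (fun k => g (v *m M ^+ k *m (\prod_(z <- rs) (M - z%:M) *m Q))) ->
    vanishing (fun k => g (v *m M ^+ k *m Q)).
  elim: rs Q => [|z rs IHrs] Q /=; first by rewrite big_nil mul1mx.
  case/andP=> z_lt1 rs_lt1; rewrite big_cons -mulmxE -mulmxA => vz.
  exact: IHrs rs_lt1 (factor _ _ z_lt1 vz).
have [rs char_rs] := closed_field_poly_normal (char_poly M).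
rewrite (monicP (char_poly_monic M)) scale1r in char_rs.
have rs_lt1 : all (fun z => `|z| < 1) rs.
  apply/allP => z z_rs; apply: M_lt1.
  by rewrite eigenvalue_root_char char_rs root_prod_XsubC.
have prod0 : \prod_(z <- rs) (M - z%:M) = 0.
  rewrite -(Cayley_Hamilton M) char_rs rmorph_prod; apply: eq_bigr => z _.
  by rewrite rmorphB /= horner_mx_X horner_mx_C.
apply: eq_vanishing (prod rs 1%:M rs_lt1 _) => [k|]; first by rewrite mulmx1.
by rewrite prod0 mul0mx; apply: eq_vanishing vanishing0 => k; rewrite mulmx0 g0.
Qed.

End Vanishing.

Section Positivity.
Variable R : realType.
Local Notation C := R[i].

Definition qform n (x : 'rV[C]_n) (Y : 'M[C]_n) : C := (x *m Y *m adjmx x) 0 0.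

Definition psdmx n (Y : 'M[C]_n) := forall x, 0 <= qform x Y.

Lemma qformP n (x : 'rV[C]_n) a Y Z :
  qform x (a *: Y + Z) = a * qform x Y + qform x Z.
Proof. by rewrite /qform mulmxDr mulmxDl -scalemxAr -scalemxAl !mxE. Qed.

Lemma qformB n (x : 'rV[C]_n) Y Z : qform x (Y - Z) = qform x Y - qform x Z.
Proof. by rewrite -scaleN1r addrC qformP mulN1r addrC. Qed.

Lemma qform_rank1 n (x v : 'rV[C]_n) :
  qform x (adjmx v *m v) = `|(x *m adjmx v) 0 0| ^+ 2.
Proof.
rewrite /qform !mulmxA -(mulmxA (x *m adjmx v)) -[v *m _]adjmxK adjmxM adjmxK.
by rewrite [LHS]mxE big_ord1 adjmxE normCK.
Qed.

Lemma psdmxD n (Y Z : 'M[C]_n) : psdmx Y -> psdmx Z -> psdmx (Y + Z).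
Proof. by move=> Y_ge0 Z_ge0 x; rewrite -[Y]scale1r qformP mul1r addr_ge0. Qed.

End Positivity.

Lemma transfer_is_linear (R : realType) q (O : 'I_(q ^ 2) -> 'M[R[i]]_q) n
  (W : 'M['M[R[i]]_q]_n) : linear (transfer O W).
Proof.
move=> a X Y; rewrite /transfer scaler_sumr -big_split /=.
by apply: eq_bigr => al _; rewrite mulmxDr mulmxDl -scalemxAr -scalemxAl.
Qed.

HB.instance Definition _ (R : realType) q (O : 'I_(q ^ 2) -> 'M[R[i]]_q) n
  (W : 'M['M[R[i]]_q]_n) :=
  GRing.isLinear.Build R[i] 'M[R[i]]_n 'M[R[i]]_n *:%R (transfer O W)
    (transfer_is_linear O W).

Section Transfer.
Variables (R : realType) (q : nat) (O : 'I_(q ^ 2) -> 'M[R[i]]_q).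
Local Notation C := R[i].
Local Notation normc := (@Normc.normc R).

Lemma transfer_mxE n (W : 'M['M[C]_q]_n) X :
  mxvec X *m transfer_mx O W = mxvec (transfer O W X).
Proof. exact: mul_vec_lin. Qed.

Lemma transfer_mx_expE n (W : 'M['M[C]_q]_n) k X :
  mxvec X *m transfer_mx O W ^+ k = mxvec (iter k (transfer O W) X).
Proof.
elim: k => [|k IHk]; first by rewrite expr0 mulmx1.
by rewrite exprSr mulmxA IHk transfer_mxE.
Qed.

Lemma eigenvalue_transferP n (W : 'M['M[C]_q]_n) lam :
  reflect (exists2 X, transfer O W X = lam *: X & X != 0)
          (eigenvalue (transfer_mx O W) lam).
Proof.
apply: (iffP eigenvalueP) => [[u Wu u0]|[X WX X0]].
  exists (vec_mx u); last by rewrite -(can_eq vec_mxK) linear0 in u0.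
  by apply: (can_inj mxvecK); rewrite -transfer_mxE vec_mxK Wu linearZ /= vec_mxK.
by exists (mxvec X); rewrite ?transfer_mxE ?WX ?linearZ // mxvec_eq0.
Qed.

Lemma transfer_affine_fixpoint n (W : 'M['M[C]_q]_n) (B : 'M[C]_n) :
  ~~ eigenvalue (transfer_mx O W) 1 -> exists X, B + transfer O W X = X.
Proof.
move=> W1; have [y Ey] := affine_fixpoint (mxvec B) W1.
exists (vec_mx y); apply: (can_inj mxvecK).
by rewrite linearD /= -transfer_mxE vec_mxK.
Qed.

Lemma qform_transfer n (W : 'M['M[C]_q]_n) x Y :
  qform x (transfer O W Y) = \sum_al qform (x *m adjmx (coefmx O W al)) Y.
Proof.
rewrite /qform /transfer mulmx_sumr mulmx_suml summxE; apply: eq_bigr => al _.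
by rewrite adjmxM adjmxK !mulmxA.
Qed.

Lemma psdmx_transfer n (W : 'M['M[C]_q]_n) Y : psdmx Y -> psdmx (transfer O W Y).
Proof. by move=> Y_ge0 x; rewrite qform_transfer sumr_ge0. Qed.

Lemma first_degree_coef_eigenvalue n (A : 'M['M[C]_q]_n) al mu :
  first_degree O A -> eigenvalue (coefmx O A al) mu -> `|mu| < 1.
Proof.
(* For P = v^dag v we get T_A P >= |mu|^2 P >= P in the psd order, so the orbit of P
   under T_A stays above P, whereas [vanishing_orbit] makes it vanish. *)
move=> A_lt1 /eigenvalueP[v v_mu v_neq0].
rewrite -normc_lt1 ltNge; apply/negP => mu_ge1.
have {}mu_ge1 : 1 <= `|mu|.
  by rewrite normr_normc (_ : 1 = 1%:C%C) // lecR.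
pose P := adjmx v *m v.
have qform_P y : qform y P = `|(y *m adjmx v) 0 0| ^+ 2 := qform_rank1 y v.
(* An opaque P keeps [rewrite] from unfolding [transfer] while matching. *)
clearbody P.
have TP_ge : psdmx (transfer O A P - P).
  move=> x; rewrite qformB qform_transfer; under eq_bigr do rewrite qform_P.
  rewrite qform_P (bigD1 al) //= -mulmxA -adjmxM v_mu adjmxZ -scalemxAr mxE.
  rewrite normrM norm_conjC exprMn addrAC.
  apply: addr_ge0; last by apply: sumr_ge0 => b _; rewrite exprn_ge0.
  by rewrite subr_ge0 ler_peMl ?exprn_ge0 ?exprn_ege1.
have iter_ge k : psdmx (iter k (transfer O A) P - P).
  elim: k => [|k IHk] /=; first by move=> x; rewrite subrr /qform mulmx0 mul0mx mxE.
  have -> : transfer O A (iter k (transfer O A) P) - P =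
            transfer O A (iter k (transfer O A) P - P) + (transfer O A P - P).
    by rewrite linearB addrA subrK.
  by apply: psdmxD => //; apply: psdmx_transfer.
have P_gt0 : 0 < qform v P.
  by rewrite qform_P exprn_gt0 // normr_gt0 lt0r_neq0 // -dotmxE dnorm_gt0.
have g_lin : scalar (fun u => qform v (vec_mx u)) by move=> a u w; rewrite linearP qformP.
have vP_gt0 : 0 < normc (qform v P) by rewrite normc_gt0 gt_eqF.
have [N /(_ N (leqnn N))] :=
  vanishing_orbit (mxvec P) A_lt1 g_lin (divr_gt0 vP_gt0 (ltr0Sn _ 1)).
rewrite /= transfer_mx_expE mxvecK.
have : normc (qform v P) <= normc (qform v (iter N (transfer O A) P)).
  by apply: normc_le (ltW P_gt0) _; rewrite -subr_ge0 -qformB iter_ge.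
lra.
Qed.

End Transfer.

Section RegularForm.
Variables (R : realType) (q : nat) (O : 'I_(q ^ 2) -> 'M[R[i]]_q) (i0 : 'I_(q ^ 2)).
Hypothesis O_orth : forall a b, op_inner (O a) (O b) = (a == b)%:R.
Hypothesis O_i0 : O i0 = 1%:M.
Variables (chi : nat) (c : 'M['M[R[i]]_q]_(1, chi)) (A : 'M['M[R[i]]_q]_chi)
  (b : 'M['M[R[i]]_q]_(chi, 1)) (d : 'M['M[R[i]]_q]_(1, 1)).
Local Notation C := R[i].
Local Notation V := (ulsubmx (regular_iMPO c A b d)).
Local Notation c_ := (coefmx O c).
Local Notation A_ := (coefmx O A).

Lemma coefmx_regular_ul al :
  coefmx O V al = block_mx (al == i0)%:R%:M (c_ al) 0 (A_ al).
Proof.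
have coefmxE m n (W : 'M_(m, n)) : coefmx O W al = map_mx (op_inner (O al)) W.
  by apply/matrixP => i j; rewrite !mxE.
rewrite /regular_iMPO block_mxKul coefmxE map_block_mx -!coefmxE.
congr block_mx; apply/matrixP => i j; rewrite !mxE.
  by rewrite !ord1 -O_i0 O_orth.
by rewrite /op_inner mulmx0 mxtrace0 mul0r.
Qed.

Lemma transfer_regular_ul (x00 : 'M[C]_1) x y X :
  transfer O V (block_mx x00 x y X) =
  block_mx x00 (x00 *m c_ i0 + x *m A_ i0)
    (adjmx (c_ i0) *m x00 + adjmx (A_ i0) *m y)
    (\sum_al (adjmx (c_ al) *m x00 *m c_ al + adjmx (c_ al) *m x *m A_ al
              + adjmx (A_ al) *m y *m c_ al) + transfer O A X).
Proof.
rewrite /transfer.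
under eq_bigr => al _ do rewrite coefmx_regular_ul adjmx_block adjmx0 adjmx_scalar
   conjC_nat !mulmx_block !mul0mx !addr0 !mul_scalar_mx !mul_mx_scalar.
rewrite sum_block_mx; congr block_mx.
1-3: rewrite (bigD1 i0) //= big1 => [|al /negbTE->];
  by rewrite ?eqxx ?mulmx0 ?addr0 -?scalemxAl ?scale1r ?scale0r ?addr0 ?mulmx0.
rewrite -big_split; apply: eq_bigr => al _ /=.
by rewrite !mulmxDl !addrA (addrAC (adjmx (c_ al) *m x00 *m c_ al)).
Qed.

Lemma eigenvalue_transfer_regular_ul lam :
  eigenvalue (transfer_mx O V) lam -> lam != 1 ->
  [\/ eigenvalue (A_ i0) lam, eigenvalue (A_ i0) lam^*
     | eigenvalue (transfer_mx O A) lam].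
Proof.
move=> /eigenvalue_transferP[Y VY Y0] lam1.
move: VY Y0; rewrite -(submxK Y) transfer_regular_ul scale_block_mx.
case/eq_block_mx => E00 E01 E10 E11.
have Y00 : ulsubmx Y = 0.
  move/eqP: E00; rewrite -subr_eq0 -{1}[ulsubmx Y]scale1r -scalerBl scalemx_eq0.
  by rewrite subr_eq0 eq_sym (negbTE lam1) => /eqP.
rewrite Y00 in E01 E10 E11 *.
have [x0|x_ne0] := eqVneq (ursubmx Y) 0; last first.
  by move=> _; apply: Or31; apply/eigenvalueP; exists (ursubmx Y); rewrite // -E01 mul0mx add0r.
have [y0|y_ne0] := eqVneq (dlsubmx Y) 0; last first.
  move=> _; apply: Or32; apply/eigenvalueP; exists (adjmx (dlsubmx Y)).
    by rewrite -adjmxZ -E10 mulmx0 add0r adjmxM adjmxK.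
  by rewrite adjmx_eq0.
rewrite x0 y0 => Y0; apply: Or33; apply/eigenvalue_transferP.
exists (drsubmx Y); last by apply: contraNneq Y0 => ->; rewrite block_mx0.
by rewrite -E11 x0 y0 big1 ?add0r // => al _; rewrite !mulmx0 !mul0mx !addr0.
Qed.

Lemma transfer_regular_ul_fixpoint :
  ~~ eigenvalue (A_ i0) 1 -> ~~ eigenvalue (transfer_mx O A) 1 ->
  exists x X, transfer O V (block_mx 1%:M x (adjmx x) X) = block_mx 1%:M x (adjmx x) X.
Proof.
move=> A1 TA1; have [x Ex] := affine_fixpoint (c_ i0) A1.
have [X EX] := transfer_affine_fixpoint (\sum_al (adjmx (c_ al) *m 1%:M *m c_ al
  + adjmx (c_ al) *m x *m A_ al + adjmx (A_ al) *m adjmx x *m c_ al)) TA1.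
by exists x, X; rewrite transfer_regular_ul EX mul1mx mulmx1 -adjmxM -adjmxD Ex.
Qed.

End RegularForm.

Theorem proposition1 (R : realType) (q : nat) (O : 'I_(q ^ 2) -> 'M[R[i]]_q)
  (chi : nat) (c : 'M['M[R[i]]_q]_(1, chi)) (A : 'M['M[R[i]]_q]_chi)
  (b : 'M['M[R[i]]_q]_(chi, 1)) (d : 'M['M[R[i]]_q]_(1, 1)) :
  (0 < q)%N ->
  orthonormal_op_basis O ->
  first_degree O A ->
  let W := regular_iMPO c A b d in
  let V := ulsubmx W in
  [/\ eigenvalue (transfer_mx O V) 1,
      (forall lam : R[i], eigenvalue (transfer_mx O V) lam -> lam != 1 ->
         `|lam| < 1) &
      exists (x : 'rV[R[i]]_chi) (Xs : 'M[R[i]]_chi),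
        let X := block_mx (1%:M : 'M[R[i]]_1) x (adjmx x) Xs in
        transfer O V X = X].
Proof.
move=> q_gt0 [O_orth O_one] A_lt1 W V.
have q2_gt0 : (0 < q ^ 2)%N by rewrite expn_gt0 q_gt0.
pose i0 := Ordinal q2_gt0; have O_i0 : O i0 = 1%:M := O_one q2_gt0.
have A0_lt1 mu : eigenvalue (coefmx O A i0) mu -> `|mu| < 1.
  exact: first_degree_coef_eigenvalue.
have [x [X VX]] := transfer_regular_ul_fixpoint O_orth O_i0 c b d
  (not_eigenvalue1 A0_lt1) (not_eigenvalue1 A_lt1).
split; last by exists x, X.
- apply/eigenvalue_transferP; exists (block_mx 1%:M x (adjmx x) X); rewrite ?scale1r //.
  rewrite -[0]block_mx0; apply/eqP => /eq_block_mx[/matrixP/(_ 0 0)/eqP].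
  by rewrite !mxE oner_eq0.
- move=> lam /(eigenvalue_transfer_regular_ul O_orth O_i0) /[apply].
  by case=> [/A0_lt1|/A0_lt1|/A_lt1] //; rewrite norm_conjC.
Qed.
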